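(* Let $\mathcal D$ be any class of dependency notions and let $\phi\in\mathbf{FO}(\mathcal D,\sqcup)$. Then $\phi$ is equivalent to some formula of the form $\bigsqcup_{i=1}^n\psi_i$ where every $\psi_i$ is in $\mathbf{FO}(\mathcal D)$.
   Context: Team semantics (lax version). For a structure $\mathfrak M$ with domain $M$, a team $X$ is a (possibly empty) set of assignments $s:V\to M$, $V$ a finite set of variables; $X(\vec v)=\{s(\vec v):s\in X\}$. Satisfaction for formulas in negation normal form: first-order literal $\alpha$: every $s\in X$ satisfies $\alpha$ (Tarski); $\psi\vee\theta$: $X=Y\cup Z$ with $\mathfrak M\models_Y\psi$, $\mathfrak M\models_Z\theta$; $\psi\wedge\theta$: both; $\exists v\psi$: some $F:X\to\mathcal P(M)\setminus\{\emptyset\}$ with $\mathfrak M\models_{X[F/v]}\psi$, $X[F/v]=\{s[m/v]:s\in X,m\in F(s)\}$; $\forall v\psi$: $\mathfrak M\models_{X[M/v]}\psi$, $X[M/v]=\{s[m/v]:s\in X,m\in M\}$. A $k$-ary dependency notion $\mathbf D$ is an isomorphism-closed class of structures $(M,R)$, $R$ a $k$-ary relation; $\mathfrak M\models_X\mathbf D\vec v$ iff $(M,X(\vec v))\in\mathbf D$. Classical disjunction: $\mathfrak M\models_X\phi\sqcup\psi$ iff $\mathfrak M\models_X\phi$ or $\mathfrak M\models_X\psi$. $\mathbf{FO}(\mathcal D)$ (resp. $\mathbf{FO}(\mathcal D,\sqcup)$) is first-order logic in negation normal form extended with the atoms of $\mathcal D$ (resp. and $\sqcup$). Two formulas are equivalent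 if satisfied by the same teams in all structures. *)

From mathcomp Require Import all_boot.
Set Implicit Arguments.
Unset Strict Implicit.
Unset Printing Implicit Defensive.

Record depnotion (k : nat) := DepNotion {
  dn_cls : forall M : Type, (k.-tuple M -> Prop) -> Prop;
  dn_iso : forall (M N : Type) (f : M -> N), bijective f ->
     forall (R : k.-tuple M -> Prop) (S : k.-tuple N -> Prop),
       (forall t, R t <-> S (map_tuple f t)) ->
       (dn_cls R <-> dn_cls S)
}.

Section Syntax.
(* signature: function symbols and relation symbols (arity given by the
   length of the argument list); I indexes the class of dependency notions *)
Context (Fsym Rsym I : Type) (ar : I -> nat).

Inductive term : Type :=
  | TVar of nat
  | TApp of Fsym & seq term.

(* formulas of FO(D, ⊔) in negation normal form *)
Inductive form : Type :=
  | FEq of term & term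
  | FNeq of term & term
  | FRel of Rsym & seq term
  | FNRel of Rsym & seq term
  | FDep (i : I) of (ar i).-tuple nat
  | FAnd of form & form
  | FOr of form & form        (* team (split) disjunction *)
  | FEx of nat & form
  | FAll of nat & form
  | FCOr of form & form.      (* classical disjunction ⊔ *)

Fixpoint tvars (t : term) : seq nat :=
  match t with
  | TVar v => [:: v]
  | TApp _ ts => flatten (map tvars ts)
  end.

Fixpoint fv (p : form) : seq nat :=
  match p with
  | FEq t1 t2 | FNeq t1 t2 => tvars t1 ++ tvars t2
  | FRel _ ts | FNRel _ ts => flatten (map tvars ts)
  | FDep _ vs => tval vs
  | FAnd p q | FOr p q | FCOr p q => fv p ++ fv q
  | FEx v p | FAll v p => [seq w <- fv p | w != v]
  end.

(* membership in FO(D), i.e. no classical disjunction *)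
Fixpoint sqcup_free (p : form) : bool :=
  match p with
  | FAnd p q | FOr p q => sqcup_free p && sqcup_free q
  | FEx _ p | FAll _ p => sqcup_free p
  | FCOr _ _ => false
  | _ => true
  end.

End Syntax.

Record structure (Fsym Rsym : Type) := Structure {
  dom : Type;
  dom_inh : inhabited dom;
  funI : Fsym -> seq dom -> dom;
  relI : Rsym -> seq dom -> Prop
}.

Section Semantics.
Context (Fsym Rsym I : Type) (ar : I -> nat) (D : forall i, depnotion (ar i)).
Context (A : structure Fsym Rsym).

(* an assignment is a partial map nat -> dom A (with finite domain, see team_on) *)
Definition assignment := nat -> option (dom A).
Definition team := assignment -> Prop.

Definition upd (s : assignment) (v : nat) (m : dom A) : assignment :=
  fun w => if w == v then Some m else s w.

Fixpoint olist (l : seq (option (dom A))) : option (seq (dom A)) :=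
  match l with
  | [::] => Some [::]
  | o :: l' => match o, olist l' with
               | Some a, Some r => Some (a :: r)
               | _, _ => None
               end
  end.

Fixpoint teval (s : assignment) (t : term Fsym) : option (dom A) :=
  match t with
  | TVar v => s v
  | TApp f ts => omap (funI f) (olist (map (teval s) ts))
  end.

Definition team_rel k (X : team) (vs : k.-tuple nat) : k.-tuple (dom A) -> Prop :=
  fun t => exists2 s, X s & [seq s v | v <- vs] = [seq Some m | m <- t].

Fixpoint sat (X : team) (p : form Fsym Rsym ar) : Prop :=
  match p with
  | FEq t1 t2 => forall s, X s -> exists a, teval s t1 = Some a /\ teval s t2 = Some a
  | FNeq t1 t2 => forall s, X s -> exists a b,
        [/\ teval s t1 = Some a, teval s t2 = Some b & a <> b]
  | FRel r ts => forall s, X s -> exists l,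
        olist (map (teval s) ts) = Some l /\ relI r l
  | FNRel r ts => forall s, X s -> exists l,
        olist (map (teval s) ts) = Some l /\ ~ relI r l
  | FDep i vs => dn_cls (D i) (team_rel X vs)
  | FAnd p q => sat X p /\ sat X q
  | FOr p q => exists (Y Z : team),
        [/\ (forall s, X s <-> Y s \/ Z s), sat Y p & sat Z q]
  | FEx v p => exists F : assignment -> dom A -> Prop,
        (forall s, X s -> exists m, F s m) /\
        sat (fun s' => exists s m, [/\ X s, F s m & s' = upd s v m]) p
  | FAll v p => sat (fun s' => exists s m, X s /\ s' = upd s v m) p
  | FCOr p q => sat X p \/ sat X q
  end.

End Semantics.

Definition team_on (Fsym Rsym : Type) (A : structure Fsym Rsym)
    (V : seq nat) (X : team A) : Prop :=
  forall s, X s -> forall w, (exists a, s w = Some a) <-> w \in V.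

Definition equivalent (Fsym Rsym I : Type) (ar : I -> nat)
    (D : forall i, depnotion (ar i)) (p q : form Fsym Rsym ar) : Prop :=
  forall (A : structure Fsym Rsym) (V : seq nat) (X : team A),
    team_on V X -> {subset fv p <= V} -> {subset fv q <= V} ->
    (sat D X p <-> sat D X q).

(* Every connective of FO(D) is satisfied by a team as soon as some witnesses
   (a conjunct pair, a split of the team, a choice function) satisfy its
   immediate subformulas, so each connective commutes with the classical
   disjunction: a team satisfies [C (p1 ⊔ p2)] iff it satisfies [C p1] or
   [C p2].  Pushing every ⊔ to the top turns a formula into the ⊔ of the
   nonempty list of its ⊔-free disjuncts, and this already holds team by team,
   without any assumption on the domain of the team. *)
From mathcomp Require Import all_boot.
From Stdlib Require List.

Lemma all_allpairs (S T R : Type) (p : pred R) (f : S -> T -> R) s t :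
  all p [seq f x y | x <- s, y <- t] = all (fun x => all (fun y => p (f x y)) t) s.
Proof. by elim: s => //= x s IHs; rewrite all_cat all_map IHs. Qed.

Lemma In_allpairs (S T R : Type) (f : S -> T -> R) s t z :
  List.In z [seq f x y | x <- s, y <- t] <->
  exists x y, [/\ List.In x s, List.In y t & z = f x y].
Proof.
elim: s => [|x s IHs] /=; first by split=> // [[x [y []]]].
rewrite List.in_app_iff List.in_map_iff IHs; split.
- by case=> [[y [<- ty]]|[x' [y [sx' ty ->]]]]; [exists x, y | exists x', y]; split; tauto.
- case=> x' [y [[<-|sx'] ty ->]]; [left; exists y | right; exists x', y]; by [].
Qed.

Section DNF.
Context {Fsym Rsym I : Type} {ar : I -> nat} (D : forall i, depnotion (ar i)).
Notation formula := (form Fsym Rsym ar).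

Fixpoint dnf (p : formula) : seq formula :=
  match p with
  | FAnd p q => [seq FAnd a b | a <- dnf p, b <- dnf q]
  | FOr p q => [seq FOr a b | a <- dnf p, b <- dnf q]
  | FEx v p => [seq FEx v a | a <- dnf p]
  | FAll v p => [seq FAll v a | a <- dnf p]
  | FCOr p q => dnf p ++ dnf q
  | _ => [:: p]
  end.

Lemma dnf_sqcup_free p : all (@sqcup_free _ _ _ ar) (dnf p).
Proof.
elim: p => //= [p IHp q IHq|p IHp q IHq|v p IHp|v p IHp|p IHp q IHq];
  rewrite ?all_allpairs ?all_map ?all_cat ?IHp //;
  by apply: sub_all IHp => a /= ->; apply: sub_all IHq => b /= ->.
Qed.

Lemma dnf_nonempty p : size (dnf p) > 0.
Proof.
elim: p => //= [p IHp q IHq|p IHp q IHq|v p IHp|v p IHp|p IHp q IHq];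
  by rewrite ?size_allpairs ?size_map ?size_cat ?muln_gt0 ?addn_gt0 ?IHp ?IHq.
Qed.

Lemma sat_dnf A (X : team A) p :
  sat D X p <-> exists2 a, List.In a (dnf p) & sat D X a.
Proof.
elim: p X => [t1 t2|t1 t2|r ts|r ts|i vs|p IHp q IHq|p IHp q IHq|v p IHp|v p IHp|p IHp q IHq] X;
  try by split=> [Sp|[a [<-|[]]]] //; eexists; [left|].
all: rewrite /=.
- split.
  + move=> [/(IHp X) [a da Sa] /(IHq X) [b db Sb]].
    by exists (FAnd a b) => //; apply/In_allpairs; exists a, b.
  + move=> [_ /In_allpairs [a [b [da db ->]]] [Sa Sb]].
    by split; [apply/IHp; exists a | apply/IHq; exists b].
- split.
  + move=> [Y [Z [XYZ /(IHp Y) [a da Sa] /(IHq Z) [b db Sb]]]].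
    by exists (FOr a b); [apply/In_allpairs; exists a, b | exists Y, Z].
  + move=> [_ /In_allpairs [a [b [da db ->]]] [Y [Z [XYZ Sa Sb]]]].
    by exists Y, Z; split; [|apply/IHp; exists a | apply/IHq; exists b].
- split.
  + move=> [G [XG /(IHp _) [a da Sa]]].
    by exists (FEx v a); [apply/List.in_map_iff; exists a | exists G].
  + move=> [_ /List.in_map_iff [a [<- da]] [G [XG Sa]]].
    by exists G; split; last by apply/IHp; exists a.
- rewrite IHp; split=> [[a da Sa]|[_ /List.in_map_iff [a [<- da]] Sa]].
  + by exists (FAll v a) => //; apply/List.in_map_iff; exists a.
  + by exists a.
- rewrite IHp IHq; split=> [[[a da Sa]|[a da Sa]]|[a /List.in_app_iff [da|da] Sa]].
  + by exists a => //; apply/List.in_app_iff; left.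
  + by exists a => //; apply/List.in_app_iff; right.
  + by left; exists a.
  + by right; exists a.
Qed.

Lemma sat_foldr_FCOr A (X : team A) (p0 : formula) ps :
  sat D X (foldr (@FCOr _ _ _ ar) p0 ps) <-> exists2 a, List.In a (p0 :: ps) & sat D X a.
Proof.
elim: ps => [|p ps IHps] /=; first by split=> [Sp|[a [<-|[]]]] //; exists p0; [left|].
rewrite IHps; split.
- case=> [Sp|[a da Sa]]; first by exists p; [right; left|].
  by exists a => //; case: da => [<-|]; [left|right; right].
- case=> a [ea|[<-|da]] Sa; [right; exists a; [left|] | left | right; exists a; [right|]] => //.
Qed.

End DNF.

Theorem mainTheorem10 (Fsym Rsym I : Type) (ar : I -> nat)
    (D : forall i, depnotion (ar i)) (phi : form Fsym Rsym ar) :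
  exists (psi0 : form Fsym Rsym ar) (psis : seq (form Fsym Rsym ar)),
    all (@sqcup_free Fsym Rsym I ar) (psi0 :: psis) /\
    equivalent D phi (foldr (@FCOr Fsym Rsym I ar) psi0 psis).
Proof.
case E: (dnf phi) (dnf_nonempty phi) (dnf_sqcup_free phi) => [//|psi0 psis] _ free.
exists psi0, psis; split=> // A V X _ _ _.
by rewrite sat_foldr_FCOr sat_dnf E.
Qed.
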